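(* For every standard function $f$ and every $x>0$, $$f(x)\ \ge\ f(0)\,|x-1|,$$ where $f(0):=\lim_{x\to0^+}f(x)$.
   Context: A function $f:(0,\infty)\to(0,\infty)$ is called standard if it is operator monotone, $f(1)=1$ and $f(t)=tf(t^{-1})$ for all $t>0$. (Such $f$ is increasing, so $f(0)=\lim_{x\to0^+}f(x)\ge0$ exists.) *)

From HB Require Import structures.
From mathcomp Require Import all_boot all_order all_algebra.
From mathcomp Require Import complex.
From mathcomp Require Import all_classical all_reals all_analysis.
Set Implicit Arguments. Unset Strict Implicit. Unset Printing Implicit Defensive.
Import Order.TTheory GRing.Theory Num.Theory.
Local Open Scope ring_scope.

Section Defs.
Variable R : realType.
Local Notation C := (complex R).

Definition adjmx n (A : 'M[C]_n) : 'M[C]_n := (map_mx Num.conj A)^T.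

Definition unitary_mx n (U : 'M[C]_n) : Prop := U *m adjmx U = 1%:M.

Definition loewner_le n (A B : 'M[C]_n) : Prop :=
  forall v : 'cV[C]_n, 0 <= ((map_mx Num.conj v)^T *m (B - A) *m v) 0 0.

Definition herm_of n (U : 'M[C]_n) (d : 'rV[R]_n) : 'M[C]_n :=
  U *m diag_mx (map_mx (fun x : R => Complex x 0) d) *m adjmx U.

(* Functional calculus f(U diag(d) U^* ) := U diag(f(d)) U^*  (well defined,
   independent of the spectral decomposition).  f is operator monotone on
   (0,oo): for all n and positive definite A <= B, f(A) <= f(B). *)
Definition operator_monotone (f : R -> R) : Prop :=
  forall (n : nat) (U V : 'M[C]_n) (d e : 'rV[R]_n),
    unitary_mx U -> unitary_mx V ->
    (forall i, 0 < d 0 i) -> (forall i, 0 < e 0 i) ->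
    loewner_le (herm_of U d) (herm_of V e) ->
    loewner_le (herm_of U (map_mx f d)) (herm_of V (map_mx f e)).

(* standard function, with f : (0,oo) -> (0,oo) represented by f : R -> R
   whose values outside (0,oo) are irrelevant *)
Definition standard (f : R -> R) : Prop :=
  [/\ operator_monotone f,
      (forall t, 0 < t -> 0 < f t),
      f 1 = 1 &
      (forall t, 0 < t -> f t = t * f t^-1)].

End Defs.

(* Operator monotonicity tested on 1 x 1 matrices makes f nondecreasing on
   (0, oo), so f(0) := lim_{t -> 0+} f t exists and 0 <= f(0) <= f y for all
   y > 0.  For x <= 1 this gives f x >= f(0) >= f(0) (1 - x); for x > 1 the
   symmetry f x = x f(1/x) gives f x >= x f(0) >= f(0) (x - 1). *)
From HB Require Import structures.
From mathcomp Require Import all_boot all_order all_algebra.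
From mathcomp Require Import complex.
From mathcomp Require Import all_classical all_reals all_analysis.
From mathcomp Require Import lra.
Import Order.TTheory GRing.Theory Num.Theory.
Local Open Scope classical_set_scope.
Local Open Scope ring_scope.

Section OneByOne.
Variable R : realType.
Local Notation C := (complex R).

Lemma herm_of1 (c : R) :
  herm_of (1 : 'M[C]_1) (const_mx c) = (real_complex R c)%:M.
Proof.
apply/matrixP => i j.
rewrite /herm_of /adjmx !ord1 !mxE !big_ord1 !mxE /= !big_ord1 !mxE /=.
by rewrite conjC1 !mulr1 !mul1r.
Qed.

Lemma loewner_le1 (a b : R) :
  loewner_le (herm_of (1 : 'M[C]_1) (const_mx a)) (herm_of 1 (const_mx b))
  <-> a <= b.
Proof.
rewrite !herm_of1 /loewner_le; split.
  move=> /(_ (const_mx 1)); rewrite !mxE !big_ord1 !mxE !big_ord1 !mxE /=.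
  by rewrite !mulr1n conjC1 mulr1 mul1r -rmorphB lecR subr_ge0.
move=> le_ab v; rewrite !mxE !big_ord1 !mxE !big_ord1 !mxE /= !mulr1n -rmorphB.
rewrite mulrC mulrA; apply: mulr_ge0; last by rewrite lecR subr_ge0.
exact: mul_conjC_ge0.
Qed.

Lemma unitary_mx1 : unitary_mx (1 : 'M[C]_1).
Proof.
apply/matrixP => i j; rewrite /adjmx !ord1 !mxE big_ord1 !mxE /=.
by rewrite conjC1 mulr1.
Qed.

Lemma operator_monotone_le (f : R -> R) : operator_monotone f ->
  forall a b, 0 < a -> a <= b -> f a <= f b.
Proof.
move=> f_om a b a_gt0 le_ab.
have map_const c : map_mx f (const_mx c : 'rV[R]_1) = const_mx (f c).
  by apply/matrixP => i j; rewrite !mxE.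
apply/loewner_le1; rewrite -!map_const.
apply: f_om; [exact: unitary_mx1 | exact: unitary_mx1 | by move=> i; rewrite mxE
  | by move=> i; rewrite mxE; exact: lt_le_trans le_ab | exact/loewner_le1].
Qed.

End OneByOne.

Section RightLimitAtZero.
Variables (R : realType) (f : R -> R).
Hypothesis f_nd : forall a b, 0 < a -> a <= b -> f a <= f b.
Hypothesis f_ge0 : forall t, 0 < t -> 0 <= f t.
Let f0 := lim (f t @[t --> (0 : R)^'+] : set_system R^o).

Lemma nondecreasing_at_right0_cvg : cvg (f t @[t --> (0 : R)^'+] : set_system R^o).
Proof.
apply: nondecreasing_at_right_is_cvgr.
  apply: nearW => y s t; rewrite in_itv /= => /andP[s_gt0 _] _ le_st.
  exact: f_nd.
apply: nearW => y; exists 0 => z [t]; rewrite /= in_itv /= => /andP[t_gt0 _] <-.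
exact: f_ge0.
Qed.

Lemma at_right0_lim_ge0 : 0 <= f0.
Proof.
apply: limr_ge; first exact: nondecreasing_at_right0_cvg.
near=> t; apply: f_ge0; near: t; exact: nbhs_right_gt.
Unshelve. all: by end_near.
Qed.

Lemma at_right0_lim_le y : 0 < y -> f0 <= f y.
Proof.
move=> y_gt0; apply: limr_le; first exact: nondecreasing_at_right0_cvg.
near=> t; apply: f_nd; first by near: t; exact: nbhs_right_gt.
apply/ltW; near: t; exact: nbhs_right_lt.
Unshelve. all: by end_near.
Qed.

End RightLimitAtZero.

Lemma inversion_symmetric_ge_dist (R : realFieldType) (f : R -> R) (L : R) :
  0 <= L -> (forall y, 0 < y -> L <= f y) ->
  (forall t, 0 < t -> f t = t * f t^-1) ->
  forall x, 0 < x -> L * `|x - 1| <= f x.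
Proof.
move=> L_ge0 L_le f_sym x x_gt0.
have [x_le1 | x_gt1] := leP x 1.
  rewrite ler0_norm ?subr_le0 // opprB.
  have := L_le x x_gt0; nra.
rewrite gtr0_norm ?subr_gt0 // f_sym //.
have := L_le x^-1; rewrite invr_gt0 => /(_ x_gt0); nra.
Qed.

Theorem lemma4 (R : realType) (f : R -> R) :
  standard f ->
  forall x : R, 0 < x ->
    f x >= lim (f t @[t --> (0 : R)^'+] : set_system R^o) * `|x - 1|.
Proof.
move=> [f_om f_gt0 _ f_sym].
have f_nd := @operator_monotone_le R f f_om.
have f_ge0 t : 0 < t -> 0 <= f t by move=> /f_gt0/ltW.
apply: inversion_symmetric_ge_dist f_sym.
- exact: at_right0_lim_ge0.
- exact: at_right0_lim_le.
Qed.
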